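(* Let $\theta_0:\mathbb{R}^d\to\mathbb{R}^{d_\theta}$ be measurable and, for each $N\ge1$, let $\hat\theta_N:\mathbb{R}^d\to\mathbb{R}^{d_\theta}$ be a (possibly random) estimator built from data independent of $X^s$ and $X^t$. Suppose (i) $\|\hat\theta_N(X^s)\|_\infty\le\xi_N$ almost surely for every $N\ge1$; (ii) $\mathbb{E}\|\theta_0(X^s)\|_\infty^4<\infty$; (iii) $r_0(X^s)$ is sub-exponentially distributed. Then for $N\ge2$, $$\mathbb{E}\|\hat\theta_N(X^t)-\theta_0(X^t)\|_2^2=\mathbb{E}\big[\|\hat\theta_N(X^s)-\theta_0(X^s)\|_2^2\,r_0(X^s)\big]\le c_1\,\mathbb{E}\|\hat\theta_N(X^s)-\theta_0(X^s)\|_2^2\log N+\frac{c_2d_\theta(\xi_N^2+1)}{N},$$ with constants $c_1,c_2$ not depending on $N$.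
   Context: $X^s,X^t$ are random vectors in $\mathbb{R}^d$ with Lebesgue densities $p,q$, $\{q>0\}\subset\{p>0\}$, and density ratio $r_0=q/p$ (with $0/0=0$). A real random variable $V$ is sub-exponentially distributed if $\mathbb{E}\exp(\varsigma|V|)<\infty$ for some $\varsigma>0$. Expectations are over both the test point and the randomness of $\hat\theta_N$. *)

From HB Require Import structures.
From mathcomp Require Import all_boot all_order all_algebra.
From mathcomp Require Import all_classical all_reals all_analysis.
Import Order.TTheory GRing.Theory Num.Theory.
Set Implicit Arguments.
Unset Strict Implicit.
Unset Printing Implicit Defensive.
Local Open Scope classical_set_scope.
Local Open Scope ring_scope.

(** Euclidean space R^n as a measurable space:
    R^0 = unit, R^(n+1) = R * R^n, with the product (Borel) sigma-algebra. *)
Fixpoint Rpow_pack (R : realType) (n : nat) :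
    {d : measure_display & measurableType d} :=
  match n with
  | 0 => existT _ _ (unit : measurableType _)
  | n.+1 => existT _ _
      ((measurableTypeR R * projT2 (Rpow_pack R n))%type : measurableType _)
  end.

Definition Rpow (R : realType) (n : nat) :
  measurableType (projT1 (Rpow_pack R n)) := projT2 (Rpow_pack R n).
Arguments Rpow : clear implicits.

Fixpoint lebRpow (R : realType) (n : nat) : set (Rpow R n) -> \bar R :=
  match n return set (Rpow R n) -> \bar R with
  | 0 => @dirac _ unit tt R
  | n.+1 => (@lebesgue_measure R \x @lebRpow R n)%E
  end.
Arguments lebRpow : clear implicits.

Definition linf (R : realType) (k : nat) (v : 'rV[R]_k) : R :=
  \big[Order.max/0]_(i < k) `|v ord0 i|.

Definition sqnorm2 (R : realType) (k : nat) (v : 'rV[R]_k) : R :=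
  \sum_(i < k) (v ord0 i) ^+ 2.

Definition is_density (R : realType) (n : nat) (p : Rpow R n -> R) : Prop :=
  [/\ measurable_fun setT p, (forall x, 0 <= p x) &
      (\int[lebRpow R n]_x (p x)%:E = 1)%E].

(** density ratio r0 = q / p with the convention 0/0 = 0 *)
Definition dratio (R : realType) (n : nat) (p q : Rpow R n -> R)
  (x : Rpow R n) : R :=
  if p x == 0 then 0 else q x / p x.

From HB Require Import structures.
From mathcomp Require Import all_boot all_order all_algebra.
From mathcomp Require Import all_classical all_reals all_analysis.
From mathcomp Require Import measurable_realfun ring lra.
Import Order.TTheory GRing.Theory Num.Theory.
Set Implicit Arguments.
Unset Strict Implicit.
Unset Printing Implicit Defensive.
Local Open Scope classical_set_scope.
Local Open Scope ring_scope.

(* Split on whether the weight r(x) exceeds t := (4/s) ln N.  Below t the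
   weight costs at most the factor t.  Above t one has e^{s r/2} >= N^2, so
   both r and r^2 are dominated by e^{s r}/N (up to constants in s); as the
   squared error is at most 2 d_theta (xi_N^2 + ||theta0||_oo^2) where p > 0,
   AM-GM on the ||theta0||_oo^2 r term leaves an excess of order
   d_theta (xi_N^2 + 1)/N times E e^{s r(X^s)} + E ||theta0(X^s)||_oo^4.
   Integrating over x and then over the randomness of the estimator gives the
   bound; the identity of the two risks is just r p = q. *)

Section exponential_tail.
Variable R : realType.

Lemma le_expR_half (s r : R) : 0 < s -> r <= 2 / s * expR (s * r / 2).
Proof.
move=> s_gt0.
have e : 2 / s * (s * r / 2) = r by field; lra.
rewrite -{1}e.
by apply: ler_wpM2l; [apply: divr_ge0; lra | have := expR_ge1Dx (s * r / 2); lra].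
Qed.

Lemma sqr_le_expR_half (s r : R) : 0 < s -> 0 <= r ->
  r ^+ 2 <= 16 / s ^+ 2 * expR (s * r / 2).
Proof.
move=> s_gt0 r_ge0; set u := s * r / 4.
have u_ge0 : 0 <= u by rewrite /u; apply: divr_ge0 => //; nra.
have u_le : u <= expR u by have := expR_ge1Dx u; lra.
have -> : s * r / 2 = u + u by rewrite /u; field.
have -> : r ^+ 2 = 16 / s ^+ 2 * u ^+ 2 by rewrite /u; field; lra.
rewrite expRD; apply: ler_wpM2l; first by apply: divr_ge0; [lra | exact: sqr_ge0].
by rewrite expr2; apply: ler_pM.
Qed.

Lemma expR_tail_gain (s t r n : R) : 0 < s -> t < r ->
  expR (s * t / 2) = n ^+ 2 -> n ^+ 2 * expR (s * r / 2) <= expR (s * r).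
Proof.
move=> s_gt0 t_lt_r <-; rewrite -expRD ler_expR.
suff : s * t <= s * r by lra.
by apply: ler_wpM2l; lra.
Qed.

Lemma tail_lin_bound (s t r n : R) : 0 < s -> 1 <= n -> 0 <= r -> t < r ->
  expR (s * t / 2) = n ^+ 2 -> n * r <= 2 / s * expR (s * r).
Proof.
move=> s_gt0 n_ge1 r_ge0 t_lt_r hn.
have gain := expR_tail_gain s_gt0 t_lt_r hn.
have n_le_n2 : n * r <= n ^+ 2 * r by rewrite expr2; apply: ler_wpM2r => //; nra.
apply: (le_trans n_le_n2).
apply: le_trans (ler_wpM2l (sqr_ge0 n) (le_expR_half r s_gt0)) _.
by rewrite mulrCA; apply: ler_wpM2l => //; apply: divr_ge0; lra.
Qed.

Lemma tail_sqr_bound (s t r n : R) : 0 < s -> 0 <= r -> t < r ->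
  expR (s * t / 2) = n ^+ 2 -> (n * r) ^+ 2 <= 16 / s ^+ 2 * expR (s * r).
Proof.
move=> s_gt0 r_ge0 t_lt_r hn.
have gain := expR_tail_gain s_gt0 t_lt_r hn.
have := sqr_le_expR_half s_gt0 r_ge0; have := expR_ge0 (s * r / 2).
have : 0 < 16 / s ^+ 2 by apply: divr_gt0; [lra | exact: exprn_gt0].
rewrite exprMn; nra.
Qed.

Lemma split_product_bound (f a D X T E1 E2 : R) :
  0 <= f -> 0 <= a -> 0 <= D -> 0 <= X -> 2 * a <= E1 -> a ^+ 2 <= E2 ->
  f <= 2 * D * (X + T) -> f * a <= D * (X + 1) * (E1 + E2 + T ^+ 2).
Proof.
move=> f_ge0 a_ge0 D_ge0 X_ge0 lin sqr f_le.
have E1_ge0 : 0 <= E1 by lra.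
have E2_ge0 : 0 <= E2 by apply: le_trans sqr; exact: sqr_ge0.
have amgm : 2 * T * a <= T ^+ 2 + a ^+ 2.
  by have := sqr_ge0 (T - a); rewrite !expr2; lra.
have h1 : f * a <= D * X * (2 * a) + D * (2 * T * a).
  by rewrite (_ : _ + _ = 2 * D * (X + T) * a); [apply: ler_wpM2r | ring].
have h2 : D * X * (2 * a) <= D * X * E1 by apply: ler_wpM2l => //; exact: mulr_ge0.
have h3 : D * (2 * T * a) <= D * (T ^+ 2 + E2) by apply: ler_wpM2l => //; lra.
have -> : D * (X + 1) * (E1 + E2 + T ^+ 2) =
          D * X * E1 + D * (T ^+ 2 + E2) + (D * E1 + D * X * T ^+ 2 + D * X * E2).
  by ring.
have := mulr_ge0 (mulr_ge0 D_ge0 X_ge0) E2_ge0.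
have := mulr_ge0 (mulr_ge0 D_ge0 X_ge0) (sqr_ge0 T).
have := mulr_ge0 D_ge0 E1_ge0.
lra.
Qed.

Lemma tail_weighted_bound (s t n f r th xi D : R) :
  0 < s -> 0 <= t -> 1 <= n -> expR (s * t / 2) = n ^+ 2 ->
  0 <= f -> 0 <= r -> 0 <= D -> f <= 2 * D * (xi ^+ 2 + th ^+ 2) ->
  f * r <= t * f + D * (xi ^+ 2 + 1) / n *
                   ((4 / s + 16 / s ^+ 2) * expR (s * r) + th ^+ 4).
Proof.
move=> s_gt0 t_ge0 n_ge1 hn f_ge0 r_ge0 D_ge0 f_le.
have tf_ge0 : 0 <= t * f by exact: mulr_ge0.
have [r_le_t | t_lt_r] := leP r t.
  have : f * r <= t * f by rewrite [t * f]mulrC; apply: ler_wpM2l.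
  suff : 0 <= D * (xi ^+ 2 + 1) / n *
              ((4 / s + 16 / s ^+ 2) * expR (s * r) + th ^+ 4) by lra.
  apply: mulr_ge0; first by apply: divr_ge0; have := sqr_ge0 xi; nra.
  apply: addr_ge0; last by rewrite exprn_even_ge0.
  by rewrite mulr_ge0 ?expR_ge0 // addr_ge0 // divr_ge0 ?sqr_ge0 //; lra.
have nr_ge0 : 0 <= n * r by nra.
have lin : 2 * (n * r) <= 4 / s * expR (s * r).
  by have := tail_lin_bound s_gt0 n_ge1 r_ge0 t_lt_r hn; lra.
have := split_product_bound f_ge0 nr_ge0 D_ge0 (sqr_ge0 xi) lin
  (tail_sqr_bound s_gt0 r_ge0 t_lt_r hn) f_le.
have -> : th ^+ 4 = th ^+ 2 ^+ 2 by rewrite -exprM.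
rewrite mulrCA -ler_pdivlMl; last lra.
suff -> : D * (xi ^+ 2 + 1) / n * ((4 / s + 16 / s ^+ 2) * expR (s * r) + th ^+ 2 ^+ 2) =
    n^-1 * (D * (xi ^+ 2 + 1) * (4 / s * expR (s * r) +
      16 / s ^+ 2 * expR (s * r) + th ^+ 2 ^+ 2)) by lra.
by field; lra.
Qed.
End exponential_tail.

Section row_norms.
Variables (R : realType) (k : nat).
Implicit Types v w : 'rV[R]_k.

Lemma linf_ge0 v : 0 <= linf v.
Proof. by rewrite /linf; elim/big_ind: _ => // a b a0 b0; rewrite le_max a0. Qed.

Lemma le_linf v (i : 'I_k) : `|v ord0 i| <= linf v.
Proof. by rewrite /linf (bigD1 i) //= le_max lexx. Qed.

Lemma sqnorm2_ge0 v : 0 <= sqnorm2 v.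
Proof. by apply: sumr_ge0 => i _; exact: sqr_ge0. Qed.

Lemma sqnorm2_subr_le v w c :
  linf v <= c -> sqnorm2 (v - w) <= 2 * k%:R * (c ^+ 2 + linf w ^+ 2).
Proof.
move=> v_le; rewrite /sqnorm2.
apply: (@le_trans _ _ (\sum_(i < k) 2 * (c ^+ 2 + linf w ^+ 2))); last first.
  by rewrite sumr_const card_ord -[_ *+ k]mulr_natr mulrAC.
apply: ler_sum => i _; rewrite !mxE.
have /(le_trans (le_linf v i)) := v_le; rewrite ler_norml => /andP[v1 v2].
have := le_linf w i; rewrite ler_norml => /andP[w1 w2].
have := linf_ge0 w; have := sqr_ge0 (v ord0 i + w ord0 i).
rewrite !expr2; nra.
Qed.
End row_norms.

Lemma measurable_inv (R : realType) : measurable_fun setT (@GRing.inv R).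
Proof.
have -> : @GRing.inv R = fun x => if x == 0 then 0 else x^-1.
  by apply/funext => x; case: eqP => // ->; rewrite invr0.
apply: measurable_fun_if => //.
- exact: (@measurable_fun_eqr _ _ _ setT id (cst 0)).
- apply: (@measurable_funS _ _ _ _ [set x : R | x != 0]) => //.
  + by apply: open_measurable; exact: open_neq.
  + by move=> x [_ /= /negbT].
  + apply: open_continuous_measurable_fun; first exact: open_neq.
    by move=> x; rewrite inE => x_neq0; exact: inv_continuous.
Qed.

Section measurable_row_norms.
Context (dT : measure_display) (T : measurableType dT) (R : realType) (k : nat).
Variable F : T -> 'rV[R]_k.
Hypothesis mF : forall i, measurable_fun setT (fun x => F x ord0 i).

Lemma measurable_linf : measurable_fun setT (fun x => linf (F x)).
Proof.
rewrite /linf; elim: (index_enum _) => [|i s IH].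
  by under eq_fun do rewrite big_nil; exact: measurable_cst.
under eq_fun do rewrite big_cons.
by apply: measurable_maxr => //; exact: measurableT_comp.
Qed.

Lemma measurable_sqnorm2 : measurable_fun setT (fun x => sqnorm2 (F x)).
Proof. by apply: measurable_sum => i; exact: measurable_funX. Qed.
End measurable_row_norms.

Section integral_bounds.
Local Open Scope ereal_scope.
Context (dT : measure_display) (T : measurableType dT) (R : realType).
Variable mu : {measure set T -> \bar R}.

Lemma ge0_integralZlD (a : R) (g h : T -> R) :
  (0 <= a)%R -> measurable_fun setT g -> (forall x, 0 <= g x)%R ->
  measurable_fun setT h -> (forall x, 0 <= h x)%R ->
  \int[mu]_x (a * g x + h x)%:E =
  a%:E * \int[mu]_x (g x)%:E + \int[mu]_x (h x)%:E.
Proof.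
move=> a_ge0 mg g_ge0 mh h_ge0.
under eq_integral do rewrite EFinD EFinM.
rewrite ge0_integralD //.
- by rewrite ge0_integralZl_EFin //; [move=> x _; rewrite lee_fin | exact/measurable_EFinP].
- by move=> x _; rewrite lee_fin mulr_ge0.
- by apply: measurable_funeM; exact/measurable_EFinP.
- by move=> x _; rewrite lee_fin.
- exact/measurable_EFinP.
Qed.

Variables p r : T -> R.
Hypotheses (mp : measurable_fun setT p) (p_ge0 : forall x, (0 <= p x)%R).
Hypotheses (mr : measurable_fun setT r) (r_ge0 : forall x, (0 <= r x)%R).

Lemma integral_tail_bound (f th : T -> R) (s t n xi D : R) :
  measurable_fun setT f -> (forall x, 0 <= f x)%R -> measurable_fun setT th ->
  (0 < s)%R -> (0 <= t)%R -> (1 <= n)%R -> expR (s * t / 2) = (n ^+ 2)%R ->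
  (0 <= D)%R ->
  {ae mu, forall x, 0 < p x -> f x <= 2 * D * (xi ^+ 2 + th x ^+ 2)}%R ->
  \int[mu]_x (f x * r x * p x)%:E <=
    t%:E * \int[mu]_x (f x * p x)%:E +
    (D * (xi ^+ 2 + 1) / n)%:E *
      ((4 / s + 16 / s ^+ 2)%:E * \int[mu]_x (expR (s * r x) * p x)%:E
       + \int[mu]_x (th x ^+ 4 * p x)%:E).
Proof.
move=> mf f_ge0 mth s_gt0 t_ge0 n_ge1 hn D_ge0 f_le.
set C := (D * (xi ^+ 2 + 1) / n)%R; set K := (4 / s + 16 / s ^+ 2)%R.
have C_ge0 : (0 <= C)%R by apply: divr_ge0; [have := sqr_ge0 xi; nra | lra].
have K_ge0 : (0 <= K)%R by rewrite addr_ge0 // divr_ge0 ?sqr_ge0 //; lra.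
have mfp : measurable_fun setT (fun x => f x * p x)%R by exact: measurable_funM.
have mep : measurable_fun setT (fun x => expR (s * r x) * p x)%R.
  by apply: measurable_funM => //; apply: measurableT_comp => //; exact: measurable_funM.
have mthp : measurable_fun setT (fun x => th x ^+ 4 * p x)%R.
  by apply: measurable_funM => //; exact: measurable_funX.
have ep_ge0 x : (0 <= expR (s * r x) * p x)%R by rewrite mulr_ge0 ?expR_ge0.
have thp_ge0 x : (0 <= th x ^+ 4 * p x)%R by rewrite mulr_ge0 ?exprn_even_ge0.
have comb_ge0 x : (0 <= K * (expR (s * r x) * p x) + th x ^+ 4 * p x)%R.
  by apply: addr_ge0 => //; exact: mulr_ge0.
have mcomb : measurable_fun setT
    (fun x => K * (expR (s * r x) * p x) + th x ^+ 4 * p x)%R.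
  by apply: measurable_funD => //; exact: measurable_funM.
have -> : t%:E * \int[mu]_x (f x * p x)%:E +
    C%:E * (K%:E * \int[mu]_x (expR (s * r x) * p x)%:E
            + \int[mu]_x (th x ^+ 4 * p x)%:E) =
    \int[mu]_x (t * (f x * p x) +
                C * (K * (expR (s * r x) * p x) + th x ^+ 4 * p x))%:E.
  rewrite ge0_integralZlD //; last 3 first.
  - by move=> x; rewrite mulr_ge0.
  - exact: measurable_funM.
  - by move=> x; rewrite mulr_ge0.
  under [X in _ = _ + X]eq_integral do rewrite EFinM.
  rewrite ge0_integralZl_EFin //; last 2 first.
  - by move=> x _; rewrite lee_fin.
  - exact/measurable_EFinP.
  by rewrite ge0_integralZlD.
apply: ae_ge0_le_integral => //.
- by move=> x _; rewrite lee_fin !mulr_ge0.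
- by apply/measurable_EFinP; apply: measurable_funM => //; exact: measurable_funM.
- move=> x _; rewrite lee_fin; apply: addr_ge0.
    by apply: mulr_ge0 => //; exact: mulr_ge0.
  by apply: mulr_ge0 => //; exact: comb_ge0.
- apply/measurable_EFinP; apply: measurable_funD; first exact: measurable_funM.
  by apply: measurable_funM => //; apply: measurable_funD => //; exact: measurable_funM.
apply: filterS f_le => x f_le_x _; rewrite lee_fin.
have [px0 | px_neq0] := eqVneq (p x) 0%R; first by rewrite px0 !(mulr0, addr0).
have p_pos : (0 < p x)%R by rewrite lt_neqAle eq_sym px_neq0 p_ge0.
have := tail_weighted_bound s_gt0 t_ge0 n_ge1 hn (f_ge0 x) (r_ge0 x) D_ge0 (f_le_x p_pos).
move=> /(ler_wpM2r (p_ge0 x)) /le_trans; apply.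
by rewrite -/C -/K le_eqVlt; apply/orP; left; apply/eqP; ring.
Qed.
End integral_bounds.

Lemma ge0_integral_le_affine (R : realType) (dO : measure_display)
    (Omega : measurableType dO) (P : probability Omega R)
    (X Y : Omega -> \bar R) (a : R) (c : \bar R) :
  measurable_fun setT X -> (forall w, 0 <= X w)%E ->
  measurable_fun setT Y -> (forall w, 0 <= Y w)%E -> 0 <= a -> (0 <= c)%E ->
  {ae P, forall w, X w <= a%:E * Y w + c}%E ->
  (\int[P]_w X w <= a%:E * \int[P]_w Y w + c)%E.
Proof.
move=> mX X_ge0 mY Y_ge0 a_ge0 c_ge0 X_le.
have aY_ge0 w : (0 <= a%:E * Y w)%E by rewrite mule_ge0.
apply: (@le_trans _ _ (\int[P]_w (a%:E * Y w + c))%E).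
  apply: ae_ge0_le_integral => //.
  - by move=> w _; rewrite adde_ge0.
  - by apply: emeasurable_funD => //; exact: measurable_funeM.
  by apply: filterS X_le => w ? _.
rewrite ge0_integralD //; last exact: measurable_funeM.
rewrite ge0_integralZl_EFin //.
rewrite integral_cst // [X in (_ + _ * X)%E](_ : _ = 1%E) ?mule1 //.
exact: probability_setT.
Qed.

Section risk_bound.
Local Open Scope ereal_scope.
Context (dT : measure_display) (T : measurableType dT) (R : realType).
Variable mu : {sigma_finite_measure set T -> \bar R}.
Context (dO : measure_display) (Omega : measurableType dO).
Variable P : probability Omega R.
Variables (k : nat) (p r : T -> R) (theta0 : T -> 'rV[R]_k).
Variables (thetahat : Omega -> T -> 'rV[R]_k) (xi : R).
Hypotheses (mp : measurable_fun setT p) (p_ge0 : forall x, (0 <= p x)%R).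
Hypotheses (mr : measurable_fun setT r) (r_ge0 : forall x, (0 <= r x)%R).
Hypothesis mtheta0 : forall i, measurable_fun setT (fun x => theta0 x ord0 i).
Hypothesis mthetahat : forall i,
  measurable_fun setT (fun z : Omega * T => thetahat z.1 z.2 ord0 i).
Hypothesis thetahat_bounded : {ae P, forall w, {ae mu, forall x,
  0 < p x -> linf (thetahat w x) <= xi}}%R.

Let sqerr (z : Omega * T) := sqnorm2 (thetahat z.1 z.2 - theta0 z.2).

Let measurable_sqerr : measurable_fun setT sqerr.
Proof.
apply: measurable_sqnorm2 => i; under eq_fun do rewrite !mxE.
by apply: measurable_funB => //; exact: measurableT_comp (mtheta0 i) measurable_snd.
Qed.

Let measurable_integral_sqerr (g : T -> R) :
  measurable_fun setT g -> (forall x, 0 <= g x)%R ->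
  measurable_fun setT (fun w => \int[mu]_x (sqerr (w, x) * g x)%:E).
Proof.
move=> mg g_ge0.
apply: (measurable_fun_fubini_tonelli_F (m2 := mu)
  (fun z : Omega * T => (sqerr z * g z.2)%:E)).
- apply/measurable_EFinP; apply: measurable_funM => //.
  exact: measurableT_comp mg measurable_snd.
- by move=> z; rewrite lee_fin mulr_ge0 ?sqnorm2_ge0.
Qed.

Lemma risk_tail_bound (s t n : R) :
  (0 < s)%R -> (0 <= t)%R -> (1 <= n)%R -> expR (s * t / 2) = (n ^+ 2)%R ->
  \int[P]_w \int[mu]_x (sqerr (w, x) * r x * p x)%:E <=
    t%:E * \int[P]_w \int[mu]_x (sqerr (w, x) * p x)%:E +
    (k%:R * (xi ^+ 2 + 1) / n)%:E *
      ((4 / s + 16 / s ^+ 2)%:E * \int[mu]_x (expR (s * r x) * p x)%:E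
       + \int[mu]_x (linf (theta0 x) ^+ 4 * p x)%:E).
Proof.
move=> s_gt0 t_ge0 n_ge1 hn.
have mrp : measurable_fun setT (fun x => r x * p x)%R by exact: measurable_funM.
apply: ge0_integral_le_affine => //.
- apply: eq_measurable_fun (measurable_integral_sqerr mrp _) => [w _|x].
    by apply: eq_integral => x _; rewrite mulrA.
  exact: mulr_ge0.
- by move=> w; apply: integral_ge0 => x _; rewrite lee_fin !mulr_ge0 ?sqnorm2_ge0.
- exact: measurable_integral_sqerr.
- by move=> w; apply: integral_ge0 => x _; rewrite lee_fin mulr_ge0 ?sqnorm2_ge0.
- have C_ge0 : (0 <= k%:R * (xi ^+ 2 + 1) / n)%R.
    by rewrite divr_ge0 ?mulr_ge0 ?addr_ge0 ?sqr_ge0 //; lra.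
  have K_ge0 : (0 <= 4 / s + 16 / s ^+ 2)%R.
    by rewrite addr_ge0 // divr_ge0 ?sqr_ge0 //; lra.
  rewrite mule_ge0 ?lee_fin // adde_ge0 //.
    by rewrite mule_ge0 ?lee_fin ?integral_ge0 // => x _; rewrite lee_fin mulr_ge0 ?expR_ge0.
  by apply: integral_ge0 => x _; rewrite lee_fin mulr_ge0 ?exprn_even_ge0.
apply: filterS thetahat_bounded => w hw.
apply: integral_tail_bound => //.
- exact: measurable_fun_pair2 measurable_sqerr.
- by move=> x; exact: sqnorm2_ge0.
- exact: measurable_linf.
apply: filterS hw => x hx /hx; exact: sqnorm2_subr_le.
Qed.
End risk_bound.

Theorem density_ratio_risk_bound (R : realType) (dT : measure_display)
  (T : measurableType dT) (mu : {sigma_finite_measure set T -> \bar R})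
  (k : nat) (p q r : T -> R) (theta0 : T -> 'rV[R]_k)
  (dO : measure_display) (Omega : measurableType dO) (P : probability Omega R)
  (thetahat : nat -> Omega -> T -> 'rV[R]_k) (xi : nat -> R) :
  measurable_fun setT p -> (forall x, 0 <= p x) ->
  measurable_fun setT r -> (forall x, 0 <= r x) -> (forall x, r x * p x = q x) ->
  (forall i, measurable_fun setT (fun x => theta0 x ord0 i)) ->
  (forall N i, measurable_fun setT
      (fun z : Omega * T => thetahat N z.1 z.2 ord0 i)) ->
  (forall N, (1 <= N)%N ->
     {ae P, forall w, {ae mu, forall x,
        0 < p x -> linf (thetahat N w x) <= xi N}}) ->
  (\int[mu]_x ((linf (theta0 x)) ^+ 4 * p x)%:E < +oo)%E ->
  (exists2 s : R, 0 < s &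
     (\int[mu]_x (expR (s * `|r x|) * p x)%:E < +oo)%E) ->
  exists c1 c2 : R, [/\ 0 < c1, 0 < c2 & forall N : nat, (2 <= N)%N ->
    let Et := (\int[P]_w \int[mu]_x
                 (sqnorm2 (thetahat N w x - theta0 x) * q x)%:E)%E in
    let Esr := (\int[P]_w \int[mu]_x
                 (sqnorm2 (thetahat N w x - theta0 x) * r x * p x)%:E)%E in
    let Es := (\int[P]_w \int[mu]_x
                 (sqnorm2 (thetahat N w x - theta0 x) * p x)%:E)%E in
    Et = Esr /\
    (Esr <= c1%:E * Es * (ln N%:R)%:E
            + (c2 * k%:R * (xi N ^+ 2 + 1) / N%:R)%:E)%E].
Proof.
move=> mp p_ge0 mr r_ge0 rpE mtheta0 mthetahat bounded moment4 [s s_gt0 mgf].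
rewrite (eq_integral (fun x => (expR (s * r x) * p x)%:E)) in mgf; last first.
  by move=> x _; rewrite ger0_norm.
set M := fine (\int[mu]_x (expR (s * r x) * p x)%:E)%E.
set A := fine (\int[mu]_x (linf (theta0 x) ^+ 4 * p x)%:E)%E.
have mgfE : (\int[mu]_x (expR (s * r x) * p x)%:E)%E = M%:E.
  rewrite fineK // ge0_fin_numE //.
  by apply: integral_ge0 => x _; rewrite lee_fin mulr_ge0 ?expR_ge0.
have moment4E : (\int[mu]_x (linf (theta0 x) ^+ 4 * p x)%:E)%E = A%:E.
  rewrite fineK // ge0_fin_numE //.
  by apply: integral_ge0 => x _; rewrite lee_fin mulr_ge0 ?exprn_even_ge0.
set K := 4 / s + 16 / s ^+ 2.
have K_ge0 : 0 <= K by rewrite addr_ge0 // divr_ge0 ?sqr_ge0 //; lra.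
have KMA_ge0 : 0 <= K * M + A.
  by rewrite addr_ge0 ?mulr_ge0 // fine_ge0 // integral_ge0 // => x _;
     rewrite lee_fin mulr_ge0 ?expR_ge0 ?exprn_even_ge0.
exists (4 / s), (K * M + A + 1); split; [by rewrite divr_gt0 //; lra | lra |].
move=> N N_ge2; cbv zeta; split.
  by apply: eq_integral => w _; apply: eq_integral => x _; rewrite -mulrA rpE.
set n : R := N%:R.
have n_gt1 : 1 < n by rewrite ltr1n.
set t := 4 / s * ln n.
have t_ge0 : 0 <= t by rewrite mulr_ge0 ?ln_ge0 ?divr_ge0 //; lra.
have hn : expR (s * t / 2) = n ^+ 2.
  rewrite (_ : s * t / 2 = 2%:R * ln n); last by rewrite /t; field; rewrite gt_eqF.
  by rewrite expRM_natl lnK // posrE; lra.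
apply: le_trans (risk_tail_bound mp p_ge0 mr r_ge0 mtheta0 (mthetahat N)
  (bounded N (ltnW N_ge2)) s_gt0 t_ge0 (ltW n_gt1) hn) _.
rewrite mgfE moment4E -/K -EFinM /=.
apply: leeD; first by rewrite /t EFinM muleAC.
rewrite lee_fin (_ : _ * k%:R * _ / n = (K * M + A + 1) * (k%:R * (xi N ^+ 2 + 1) / n)).
  by rewrite mulrC ler_wpM2r ?divr_ge0 ?mulr_ge0 ?addr_ge0 ?sqr_ge0 //; lra.
by field; rewrite gt_eqF //; lra.
Qed.

(* The canonical [SigmaFiniteMeasure] instance on [m1 \x m2] is the one for
   subprobabilities; this alias carries the general one. *)
Section sigma_finite_product.
Context (d1 d2 : measure_display) (T1 : measurableType d1)
  (T2 : measurableType d2) (R : realType).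
Variables (m1 : {sigma_finite_measure set T1 -> \bar R})
  (m2 : {sigma_finite_measure set T2 -> \bar R}).

Definition sigma_finite_product := (m1 \x m2)%E.
HB.instance Definition _ := Measure.on sigma_finite_product.
HB.instance Definition _ := Measure_isSigmaFinite.Build _ _ _ sigma_finite_product
  (lebesgue_integral_fubini.product_measure_sigma_finite_subproof m1 m2).
End sigma_finite_product.

Lemma lebRpow_sigma_finite (R : realType) (n : nat) :
  exists m : {sigma_finite_measure set (Rpow R n) -> \bar R}, lebRpow R n = m.
Proof.
elim: n => [|n [m mE]]; first by exists (@dirac _ unit tt R).
by exists (sigma_finite_product (@lebesgue_measure R) m); rewrite /= mE.
Qed.

Section density_ratio.
Variables (R : realType) (n : nat) (p q : Rpow R n -> R).
Hypotheses (p_ge0 : forall x, 0 <= p x) (q_ge0 : forall x, 0 <= q x).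

Lemma dratioE x : dratio p q x = q x / p x.
Proof. by rewrite /dratio; case: eqP => // ->; rewrite invr0 mulr0. Qed.

Lemma dratio_ge0 x : 0 <= dratio p q x.
Proof. by rewrite dratioE divr_ge0. Qed.

Lemma dratio_mulr : (forall x, 0 < q x -> 0 < p x) ->
  forall x, dratio p q x * p x = q x.
Proof.
move=> supp x; rewrite dratioE; have [px0 | px_neq0] := eqVneq (p x) 0.
  rewrite px0 mulr0; apply/esym/eqP; rewrite eq_le q_ge0 andbT leNgt.
  by apply/negP => /supp; rewrite px0 ltxx.
by rewrite divfK.
Qed.

Lemma measurable_dratio :
  measurable_fun setT p -> measurable_fun setT q -> measurable_fun setT (dratio p q).
Proof.
move=> mp mq.
have mqp : measurable_fun setT (fun x => q x / p x).
  by apply: measurable_funM => //; exact: measurableT_comp (@measurable_inv R) mp.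
by apply: eq_measurable_fun mqp => x _; rewrite dratioE.
Qed.
End density_ratio.

Theorem corollary4p2 (R : realType) (d dth : nat)
  (p q : Rpow R d -> R) (theta0 : Rpow R d -> 'rV[R]_dth)
  (dO : measure_display) (Omega : measurableType dO) (P : probability Omega R)
  (thetahat : nat -> Omega -> Rpow R d -> 'rV[R]_dth) (xi : nat -> R) :
  is_density p -> is_density q ->
  (forall x, 0 < q x -> 0 < p x) ->
  (forall i, measurable_fun setT (fun x => theta0 x ord0 i)) ->
  (forall N i, measurable_fun setT
      (fun z : Omega * Rpow R d => thetahat N z.1 z.2 ord0 i)) ->
  (* (i) ||thetahat_N(X^s)||_oo <= xi_N almost surely, for every N >= 1 *)
  (forall N, (1 <= N)%N ->
     {ae P, forall w, {ae lebRpow R d, forall x,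
        0 < p x -> linf (thetahat N w x) <= xi N}}) ->
  (* (ii) E ||theta0(X^s)||_oo^4 < oo *)
  (\int[lebRpow R d]_x ((linf (theta0 x)) ^+ 4 * p x)%:E < +oo)%E ->
  (* (iii) r0(X^s) is sub-exponentially distributed *)
  (exists2 s : R, 0 < s &
     (\int[lebRpow R d]_x (expR (s * `|dratio p q x|) * p x)%:E < +oo)%E) ->
  exists c1 c2 : R, [/\ 0 < c1, 0 < c2 & forall N : nat, (2 <= N)%N ->
    let Et := (\int[P]_w \int[lebRpow R d]_x
                 (sqnorm2 (thetahat N w x - theta0 x) * q x)%:E)%E in
    let Esr := (\int[P]_w \int[lebRpow R d]_x
                 (sqnorm2 (thetahat N w x - theta0 x) * dratio p q x * p x)%:E)%E in
    let Es := (\int[P]_w \int[lebRpow R d]_x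
                 (sqnorm2 (thetahat N w x - theta0 x) * p x)%:E)%E in
    Et = Esr /\
    (Esr <= c1%:E * Es * (ln N%:R)%:E
            + (c2 * dth%:R * (xi N ^+ 2 + 1) / N%:R)%:E)%E].
Proof.
move=> [mp p_ge0 _] [mq q_ge0 _] supp mtheta0 mthetahat bounded moment4 mgf.
have [m mE] := lebRpow_sigma_finite R d.
rewrite mE in bounded moment4 mgf *.
apply: density_ratio_risk_bound mgf => //.
- exact: measurable_dratio.
- exact: dratio_ge0.
- exact: dratio_mulr.
Qed.
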